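(* Let $l\in\mathbb N_0$. The following are equivalent: (i) $J^0(l,0;u)\ge0$ for all $u\in\mathscr U_{ad}$; (ii) $u\mapsto J(l,\xi;u)$ is convex for some initial state $\xi$; (iii) $u\mapsto J(l,\xi;u)$ is convex for every initial state $\xi$; (iv) $u\mapsto J^0(l,\xi;u)$ is convex for some $\xi$; (v) $u\mapsto J^0(l,\xi;u)$ is convex for every $\xi$; (vi) $\mathcal M\ge0$.
   Context: Fix integers $N\ge1$, $n,m\ge1$, $\mathbb N_0=\{0,\dots,N-1\}$. On a complete probability space, for initial time $l\in\mathbb N_0$, let $\omega_l,\dots,\omega_{N-1}$ be real random variables and $\xi$ a square-integrable $\mathbb R^n$-valued initial state independent of them; $\mathfrak F_k=\sigma\{\xi,\omega_l,\dots,\omega_k\}$, $\mathbb E[\omega_{k+1}|\mathfrak F_k]=0$, $\mathbb E[\omega_{k+1}^2|\mathfrak F_k]=1$. $\mathscr U_{ad}$: sequences $u=(u_l,\dots,u_{N-1})$, $u_k$ $\mathfrak F_k$-measurable in $\mathbb R^m$, $\mathbb E\sum|u_k|^2<\infty$, a Hilbert space with inner product $\langle u,v\rangle=\mathbb E\sum_k\langle u_k,v_k\rangle$. State: $x_{k+1}=A_kx_k+\bar A_k\mathbb Ex_k+B_ku_k+\bar B_k\mathbb Eu_k+b_k+(C_kx_k+\bar C_k\mathbb Ex_k+D_ku_k+\bar D_k\mathbb Eu_k+\sigma_k)\omega_k$, $x_l=\xi$. Cost: $J(l,\xi;u)=\mathbb E\{\langle Gx_N,x_N\rangle+2\langle g,x_N\rangle+\langle\bar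 G\mathbb Ex_N,\mathbb Ex_N\rangle+2\langle\bar g,\mathbb Ex_N\rangle+\sum_{k=l}^{N-1}[\langle Q_kx_k,x_k\rangle+2\langle S_ku_k,x_k\rangle+\langle R_ku_k,u_k\rangle+2\langle q_k,x_k\rangle+2\langle\rho_k,u_k\rangle+\langle\bar Q_k\mathbb Ex_k,\mathbb Ex_k\rangle+2\langle\bar S_k\mathbb Eu_k,\mathbb Ex_k\rangle+\langle\bar R_k\mathbb Eu_k,\mathbb Eu_k\rangle+2\langle\bar q_k,\mathbb Ex_k\rangle+2\langle\bar\rho_k,\mathbb Eu_k\rangle]\}$, deterministic $A_k,\bar A_k,C_k,\bar C_k,Q_k,\bar Q_k,G,\bar G\in\mathbb R^{n\times n}$, $B_k,\bar B_k,D_k,\bar D_k,S_k,\bar S_k\in\mathbb R^{n\times m}$, $R_k,\bar R_k\in\mathbb R^{m\times m}$ ($Q,\bar Q,R,\bar R,G,\bar G$ symmetric), deterministic $b_k,\sigma_k$, square-integrable random $g,\bar g$, adapted $q,\bar q,\rho,\bar\rho$. $J^0$ is $J$ with $b,\sigma,g,\bar g,q,\bar q,\rho,\bar\rho$ zero. $\mathcal M$ denotes the bounded self-adjoint linear operator on $\mathscr U_{ad}$ with $J^0(l,0;u)=\langle\mathcal Mu,u\rangle$ for all $u\in\mathscr U_{ad}$. *)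

From HB Require Import structures.
From mathcomp Require Import all_boot all_order all_algebra.
From mathcomp Require Import all_classical all_reals all_analysis.
Set Implicit Arguments. Unset Strict Implicit. Unset Printing Implicit Defensive.
Import Order.TTheory GRing.Theory Num.Theory.
Local Open Scope classical_set_scope.
Local Open Scope ring_scope.

(** Deterministic and random data of the mean-field LQ problem.
    Vectors of R^k are column vectors 'cV[R]_k; time-indexed coefficients
    are functions of k : nat (only k < N matters). *)
Record lqdata (R : realType) (T : Type) (n m : nat) := LQData {
  cA : nat -> 'M[R]_n;  cAb : nat -> 'M[R]_n;
  cB : nat -> 'M[R]_(n, m); cBb : nat -> 'M[R]_(n, m);
  cC : nat -> 'M[R]_n;  cCb : nat -> 'M[R]_n;
  cD : nat -> 'M[R]_(n, m); cDb : nat -> 'M[R]_(n, m);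
  cb : nat -> 'cV[R]_n; csig : nat -> 'cV[R]_n;
  cQ : nat -> 'M[R]_n;  cQb : nat -> 'M[R]_n;
  cS : nat -> 'M[R]_(n, m); cSb : nat -> 'M[R]_(n, m);
  cR : nat -> 'M[R]_m;  cRb : nat -> 'M[R]_m;
  cG : 'M[R]_n; cGb : 'M[R]_n;
  cg : T -> 'cV[R]_n; cgb : T -> 'cV[R]_n;
  cq : nat -> T -> 'cV[R]_n; cqb : nat -> T -> 'cV[R]_n;
  crho : nat -> T -> 'cV[R]_m; crhob : nat -> T -> 'cV[R]_m }.

Definition homog (R : realType) (T : Type) (n m : nat) (D : lqdata R T n m) :=
  @LQData R T n m (cA D) (cAb D) (cB D) (cBb D) (cC D) (cCb D) (cD D) (cDb D)
    (fun _ => 0) (fun _ => 0)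
    (cQ D) (cQb D) (cS D) (cSb D) (cR D) (cRb D) (cG D) (cGb D)
    (fun _ => 0) (fun _ => 0) (fun _ _ => 0) (fun _ _ => 0) (fun _ _ => 0) (fun _ _ => 0).

Definition dot (R : realType) (k : nat) (a b : 'cV[R]_k) : R := (a^T *m b) 0 0.

Section S.
Context (R : realType) (d : measure_display) (T : measurableType d) (P : probability T R).

(** Expectation of a real random variable (meaningful for integrable ones). *)
Definition Ex (f : T -> R) : R := fine (\int[P]_(t in setT) (f t)%:E)%E.
Definition Ev (k : nat) (X : T -> 'cV[R]_k) : 'cV[R]_k :=
  \col_(i < k) Ex (fun t => X t i 0).

Definition sqint (f : T -> R) : Prop :=
  measurable_fun setT f /\ P.-integrable setT (fun t => ((f t) ^+ 2)%:E).
Definition sqintv (k : nat) (X : T -> 'cV[R]_k) : Prop :=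
  forall i : 'I_k, sqint (fun t => X t i 0).

Definition Fmeas (F : set (set T)) (f : T -> R) : Prop :=
  forall B : set R, measurable B -> F (f @^-1` B).
Definition Fmeasv (k : nat) (F : set (set T)) (X : T -> 'cV[R]_k) : Prop :=
  forall i : 'I_k, Fmeas F (fun t => X t i 0).

Definition is_condexp (F : set (set T)) (X Y : T -> R) : Prop :=
  Fmeas F Y /\ P.-integrable setT (EFin \o X) /\ P.-integrable setT (EFin \o Y) /\
  forall A, F A -> (\int[P]_(t in A) (X t)%:E = \int[P]_(t in A) (Y t)%:E)%E.

Definition gen (n : nat) (xi : T -> 'cV[R]_n) (om : nat -> T -> R) (a b : nat)
  : set (set T) :=
  [set A | (exists (i : 'I_n) (B : set R), measurable B /\
              A = (fun t => xi t i 0) @^-1` B) \/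
           (exists (j : nat) (B : set R), (a <= j <= b)%N /\ measurable B /\
              A = om j @^-1` B)].
Definition filt (n : nat) (xi : T -> 'cV[R]_n) (om : nat -> T -> R) (l k : nat) :=
  <<s gen xi om l k >>.
(** sigma{xi} and sigma{omega_l, ..., omega_{N-1}} *)
Definition sig_vec (n : nat) (xi : T -> 'cV[R]_n) := <<s gen xi (fun _ _ => 0) 1 0 >>.
Definition sig_noise (om : nat -> T -> R) (l N : nat) :=
  <<s gen (fun _ => (0 : 'cV[R]_0)) om l N.-1 >>.

Definition indep (F1 F2 : set (set T)) : Prop :=
  forall A B, F1 A -> F2 B -> (P (A `&` B) = P A * P B)%E.

Definition init_state (n : nat) (om : nat -> T -> R) (l N : nat) (xi : T -> 'cV[R]_n) :=
  sqintv xi /\ indep (sig_vec xi) (sig_noise om l N).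

Section Problem.
Context (n m N l : nat) (om : nat -> T -> R) (D : lqdata R T n m).

Definition admissible (xi0 : T -> 'cV[R]_n) (u : nat -> T -> 'cV[R]_m) : Prop :=
  forall k, (l <= k < N)%N -> Fmeasv (filt xi0 om l k) (u k) /\ sqintv (u k).

Definition ipU (u v : nat -> T -> 'cV[R]_m) : R :=
  Ex (fun t => \sum_(l <= k < N) dot (u k t) (v k t)).

(** x_{l+j} *)
Fixpoint xs (xi : T -> 'cV[R]_n) (u : nat -> T -> 'cV[R]_m) (j : nat) : T -> 'cV[R]_n :=
  match j with
  | 0 => xi
  | j'.+1 =>
    let k := (l + j')%N in
    let x := xs xi u j' in
    let Exk := Ev x in
    let Euk := Ev (u k) in
    fun t => cA D k *m x t + cAb D k *m Exk + cB D k *m u k t + cBb D k *m Euk + cb D k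
      + om k t *: (cC D k *m x t + cCb D k *m Exk + cD D k *m u k t
                   + cDb D k *m Euk + csig D k)
  end.

Definition state xi u (k : nat) : T -> 'cV[R]_n := xs xi u (k - l).

Definition cost (xi : T -> 'cV[R]_n) (u : nat -> T -> 'cV[R]_m) : R :=
  let x := state xi u in
  Ex (fun t =>
    dot (cG D *m x N t) (x N t) + 2 * dot (cg D t) (x N t)
    + dot (cGb D *m Ev (x N)) (Ev (x N)) + 2 * dot (cgb D t) (Ev (x N))
    + \sum_(l <= k < N)
        ( dot (cQ D k *m x k t) (x k t) + 2 * dot (cS D k *m u k t) (x k t)
        + dot (cR D k *m u k t) (u k t) + 2 * dot (cq D k t) (x k t)
        + 2 * dot (crho D k t) (u k t)
        + dot (cQb D k *m Ev (x k)) (Ev (x k))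
        + 2 * dot (cSb D k *m Ev (u k)) (Ev (x k))
        + dot (cRb D k *m Ev (u k)) (Ev (u k))
        + 2 * dot (cqb D k t) (Ev (x k)) + 2 * dot (crhob D k t) (Ev (u k)))).

Definition wellposed (xi0 : T -> 'cV[R]_n) : Prop :=
  forall xi u, init_state om l N xi -> admissible xi0 u ->
    forall k, (l <= k <= N)%N -> sqintv (state xi u k).
End Problem.

Definition convex_on_U (m : nat) (adm : (nat -> T -> 'cV[R]_m) -> Prop)
    (f : (nat -> T -> 'cV[R]_m) -> R) : Prop :=
  forall u v, adm u -> adm v -> forall lam : R, 0 <= lam <= 1 ->
    f (fun k t => lam *: u k t + (1 - lam) *: v k t) <= lam * f u + (1 - lam) * f v.
End S.

From HB Require Import structures.
From mathcomp Require Import all_boot all_order all_algebra.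
From mathcomp Require Import all_classical all_reals all_analysis.
From mathcomp Require Import measurable_realfun lra ring zify.
Import Order.TTheory GRing.Theory Num.Theory.
Local Open Scope classical_set_scope.
Local Open Scope ring_scope.

Set Implicit Arguments. Unset Strict Implicit. Unset Printing Implicit Defensive.

(* The state is affine in (xi, u) and the cost is quadratic, so along a segment
   of controls
     J(xi; lam u + (1 - lam) v)
       = lam J(xi; u) + (1 - lam) J(xi; v) - lam (1 - lam) J0(0; u - v),
   where J0(0; u - v) appears because the difference of the two states is the
   homogeneous state driven by u - v from 0, and the linear and constant parts
   of the cost cancel in the second difference.  Hence J(xi; .) is convex iff
   J0(0; .) >= 0 (take v = 0, lam = 1/2 for the converse), whatever xi and the
   inhomogeneous data are; and J0(0; u) = <M u, u>. *)

Section SquareIntegrable.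
Context (R : realType) (d : measure_display) (T : measurableType d).
Context (P : probability T R).

Definition L1 (f : T -> R) := P.-integrable setT (EFin \o f).

Lemma L1D f g : L1 f -> L1 g -> L1 (fun t => f t + g t).
Proof.
by move=> hf hg; apply: eq_integrable (integrableD measurableT hf hg).
Qed.

Lemma L1Z a f : L1 f -> L1 (fun t => a * f t).
Proof.
by move=> hf; apply: eq_integrable (integrableZl measurableT a hf).
Qed.

Lemma L1_sum (I : eqType) (s : seq I) (F : I -> T -> R) :
  (forall i, i \in s -> L1 (F i)) -> L1 (fun t => \sum_(i <- s) F i t).
Proof.
move=> hF; apply: eq_integrable (integrable_sum measurableT s hF) => // t _.
by rewrite /= sumEFin -big_seq.
Qed.

Lemma ExD f g : L1 f -> L1 g -> Ex P (fun t => f t + g t) = Ex P f + Ex P g.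
Proof. exact: RintegralD. Qed.

Lemma ExB f g : L1 f -> L1 g -> Ex P (fun t => f t - g t) = Ex P f - Ex P g.
Proof. exact: RintegralB. Qed.

Lemma ExZ a f : L1 f -> Ex P (fun t => a * f t) = a * Ex P f.
Proof. exact: RintegralZl. Qed.

Lemma sqint_cst c : sqint P (fun _ => c).
Proof.
split; first exact: measurable_cst.
exact: finite_measure_integrable_cst.
Qed.

Lemma L1_mul_sqint f g : sqint P f -> sqint P g -> L1 (fun t => f t * g t).
Proof.
move=> [mf if2] [mg ig2].
apply: le_integrable (integrableD measurableT if2 ig2) => //.
  apply/measurable_EFinP; exact: measurable_funM.
move=> t _ /=; rewrite lee_fin normrM [leRHS]ger0_norm ?addr_ge0 ?sqr_ge0 //.
rewrite -[f t ^+ 2]real_normK ?num_real // -[g t ^+ 2]real_normK ?num_real //.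
have := sqr_ge0 (`|f t| - `|g t|); have := normr_ge0 (f t); have := normr_ge0 (g t).
nra.
Qed.

Lemma sqint_L1 f : sqint P f -> L1 f.
Proof.
move=> hf; have := L1_mul_sqint hf (sqint_cst 1).
by under eq_fun do rewrite mulr1.
Qed.

Lemma sqintZ a f : sqint P f -> sqint P (fun t => a * f t).
Proof.
move=> [mf if2]; split; first exact: measurable_funM.
apply: eq_integrable (integrableZl measurableT (a ^+ 2) if2) => // t _.
by rewrite /= -EFinM exprMn.
Qed.

Lemma sqintD f g : sqint P f -> sqint P g -> sqint P (fun t => f t + g t).
Proof.
move=> [mf if2] [mg ig2]; split; first exact: measurable_funD.
apply: le_integrable (integrableD measurableT (integrableZl measurableT 2 if2)
                                              (integrableZl measurableT 2 ig2)) => //.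
  by apply/measurable_EFinP; apply: measurable_funX; exact: measurable_funD.
move=> t _ /=; rewrite lee_fin ger0_norm ?sqr_ge0 // ger0_norm; last first.
  by rewrite addr_ge0 // mulr_ge0 // sqr_ge0.
have := sqr_ge0 (f t - g t); nra.
Qed.

Lemma sqint_sum (I : Type) (s : seq I) (F : I -> T -> R) :
  (forall i, sqint P (F i)) -> sqint P (fun t => \sum_(i <- s) F i t).
Proof.
move=> hF; elim: s => [|i s IH].
  by under eq_fun do rewrite big_nil; exact: sqint_cst.
by under eq_fun do rewrite big_cons; exact: sqintD.
Qed.

Lemma sqintv_cst k (c : 'cV[R]_k) : sqintv P (fun _ => c).
Proof. by move=> i; exact: sqint_cst. Qed.

Lemma sqintv_lin k a b (X Y : T -> 'cV[R]_k) : sqintv P X -> sqintv P Y ->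
  sqintv P (fun t => a *: X t + b *: Y t).
Proof.
move=> hX hY i; under eq_fun do rewrite !mxE.
by apply: sqintD; apply: sqintZ.
Qed.

Lemma sqintvB k (X Y : T -> 'cV[R]_k) : sqintv P X -> sqintv P Y ->
  sqintv P (fun t => X t - Y t).
Proof.
move=> hX hY; have := sqintv_lin 1 (-1) hX hY.
by under eq_fun do rewrite scale1r scaleN1r.
Qed.

Lemma sqintv_mulmx k p (A : 'M[R]_(p, k)) (X : T -> 'cV[R]_k) : sqintv P X ->
  sqintv P (fun t => A *m X t).
Proof.
move=> hX i; under eq_fun do rewrite !mxE.
by apply: sqint_sum => j; apply: sqintZ.
Qed.

Lemma L1_dot k (X Y : T -> 'cV[R]_k) : sqintv P X -> sqintv P Y ->
  L1 (fun t => dot (X t) (Y t)).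
Proof.
move=> hX hY; rewrite /dot; under eq_fun do rewrite !mxE.
apply: L1_sum => j _; under eq_fun do rewrite !mxE.
exact: L1_mul_sqint.
Qed.

Lemma Ev_lin k a b (X Y : T -> 'cV[R]_k) : sqintv P X -> sqintv P Y ->
  Ev P (fun t => a *: X t + b *: Y t) = a *: Ev P X + b *: Ev P Y.
Proof.
move=> hX hY; apply/matrixP => i j; rewrite !mxE.
have hXi := sqint_L1 (hX i); have hYi := sqint_L1 (hY i).
under eq_fun do rewrite !mxE.
by rewrite ExD ?ExZ //; apply: L1Z.
Qed.

End SquareIntegrable.

Section Admissible.
Context (R : realType) (d : measure_display) (T : measurableType d).
Context (P : probability T R) (n m N l : nat) (om : nat -> T -> R).
Context (xi0 : T -> 'cV[R]_n).

Lemma Fmeas_cst (G : set (set T)) (c : R) : Fmeas <<s G >> (fun _ => c).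
Proof.
move=> B mB.
have := @measurable_cst _ _ (g_sigma_algebraType G) _ setT c measurableT B mB.
by rewrite setTI.
Qed.

Lemma FmeasB (G : set (set T)) (f g : T -> R) :
  Fmeas <<s G >> f -> Fmeas <<s G >> g -> Fmeas <<s G >> (fun t => f t - g t).
Proof.
have meas h : Fmeas <<s G >> h ->
    measurable_fun (setT : set (g_sigma_algebraType G)) h.
  by move=> hh _ B mB; rewrite setTI; exact: hh.
move=> /meas mf /meas mg B mB.
by have := measurable_funB mf mg measurableT mB; rewrite setTI.
Qed.

Lemma admissible0 : admissible P N l om xi0 (fun _ _ => 0 : 'cV[R]_m).
Proof.
move=> k _; split; last exact: sqintv_cst.
by move=> i; under eq_fun do rewrite mxE; exact: Fmeas_cst.
Qed.

Lemma admissibleB (u v : nat -> T -> 'cV[R]_m) :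
  admissible P N l om xi0 u -> admissible P N l om xi0 v ->
  admissible P N l om xi0 (fun k t => u k t - v k t).
Proof.
move=> hu hv k hk; have [Fu su] := hu k hk; have [Fv sv] := hv k hk.
split; last exact: sqintvB.
by move=> i; under eq_fun do rewrite !mxE; exact: FmeasB.
Qed.

End Admissible.

Section Mixture.
Context (R : comPzRingType) (lam : R).

(* A quadratic form q satisfies [quadmix (q w) (q u) (q v) (q e)] whenever
   [mixdiff w u v e]; so do linear forms and constants, with 0 for q e. *)
Definition mixdiff (V : lmodType R) (w u v e : V) :=
  w = lam *: u + (1 - lam) *: v /\ e = u - v.

Definition quadmix (w u v e : R) :=
  w = lam * u + (1 - lam) * v - lam * (1 - lam) * e.

Lemma mixdiff_cst (V : lmodType R) (c : V) : mixdiff c c c 0.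
Proof. by split; rewrite ?subrr // -scalerDl addrC subrK scale1r. Qed.

Lemma mixdiffD (V : lmodType R) (w1 u1 v1 e1 w2 u2 v2 e2 : V) :
  mixdiff w1 u1 v1 e1 -> mixdiff w2 u2 v2 e2 ->
  mixdiff (w1 + w2) (u1 + u2) (v1 + v2) (e1 + e2).
Proof. by move=> [-> ->] [-> ->]; split; rewrite ?opprD ?scalerDr addrACA. Qed.

Lemma mixdiffZ (V : lmodType R) c (w u v e : V) :
  mixdiff w u v e -> mixdiff (c *: w) (c *: u) (c *: v) (c *: e).
Proof.
move=> [-> ->]; split; last by rewrite scalerBr.
by rewrite scalerDr !scalerA mulrC (mulrC c).
Qed.

Lemma mixdiff_mulmx p k (A : 'M[R]_(p, k)) (w u v e : 'cV[R]_k) :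
  mixdiff w u v e -> mixdiff (A *m w) (A *m u) (A *m v) (A *m e).
Proof. by move=> [-> ->]; split; rewrite ?mulmxBr // mulmxDr !scalemxAr. Qed.

Lemma quadmixD w1 u1 v1 e1 w2 u2 v2 e2 :
  quadmix w1 u1 v1 e1 -> quadmix w2 u2 v2 e2 ->
  quadmix (w1 + w2) (u1 + u2) (v1 + v2) (e1 + e2).
Proof. by rewrite /quadmix => -> ->; ring. Qed.

Lemma quadmixM c w u v e : quadmix w u v e -> quadmix (c * w) (c * u) (c * v) (c * e).
Proof. by rewrite /quadmix => ->; ring. Qed.

Lemma quadmix_sum (I : eqType) (s : seq I) (W U V E : I -> R) :
  (forall i, i \in s -> quadmix (W i) (U i) (V i) (E i)) ->
  quadmix (\sum_(i <- s) W i) (\sum_(i <- s) U i) (\sum_(i <- s) V i)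
          (\sum_(i <- s) E i).
Proof.
elim: s => [|i s IH] h; first by rewrite /quadmix !big_nil !mulr0 !addr0 subr0.
rewrite !big_cons; apply: quadmixD; first by apply: h; rewrite mem_head.
by apply: IH => j js; apply: h; rewrite inE js orbT.
Qed.

End Mixture.

Lemma quadmix_dot (R : realType) (lam : R) k (aw au av ae bw bu bv be : 'cV[R]_k) :
  mixdiff lam aw au av ae -> mixdiff lam bw bu bv be ->
  quadmix lam (dot aw bw) (dot au bu) (dot av bv) (dot ae be).
Proof.
move=> [-> ->] [-> ->]; rewrite /quadmix /dot !mxE !mulr_sumr -sumrN -!big_split.
by apply: eq_bigr => i _; rewrite !mxE /=; ring.
Qed.

Section MixtureExpectation.
Context (R : realType) (d : measure_display) (T : measurableType d).
Context (P : probability T R) (lam : R).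

Lemma mixdiff_Ev k (W U V E : T -> 'cV[R]_k) :
  (forall t, mixdiff lam (W t) (U t) (V t) (E t)) -> sqintv P U -> sqintv P V ->
  mixdiff lam (Ev P W) (Ev P U) (Ev P V) (Ev P E).
Proof.
move=> h hU hV.
have -> : W = fun t => lam *: U t + (1 - lam) *: V t by apply/funext => t; case: (h t).
have -> : E = fun t => 1 *: U t + (-1) *: V t.
  by apply/funext => t; case: (h t) => _ ->; rewrite scale1r scaleN1r.
by rewrite !Ev_lin //; split; rewrite // scale1r scaleN1r.
Qed.

Lemma quadmix_Ex (W U V E : T -> R) :
  (forall t, quadmix lam (W t) (U t) (V t) (E t)) -> L1 P U -> L1 P V -> L1 P E ->
  quadmix lam (Ex P W) (Ex P U) (Ex P V) (Ex P E).
Proof.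
move=> h hU hV hE.
have -> : W = fun t => lam * U t + (1 - lam) * V t - lam * (1 - lam) * E t.
  exact: funext h.
by rewrite /quadmix ExB ?ExD ?ExZ //; do ?apply: L1D; apply: L1Z.
Qed.

End MixtureExpectation.

Section StateMixture.
Context (R : realType) (d : measure_display) (T : measurableType d).
Context (P : probability T R) (n m N l : nat) (om : nat -> T -> R).
Context (E : lqdata R T n m) (xi : T -> 'cV[R]_n) (lam : R).
Context (u v : nat -> T -> 'cV[R]_m).

Local Notation w := (fun k t => lam *: u k t + (1 - lam) *: v k t).
Local Notation e := (fun k t => u k t - v k t).

Lemma state_mixdiff :
  (forall k, (l <= k <= N)%N ->
     sqintv P (state P l om E xi u k) /\ sqintv P (state P l om E xi v k)) ->
  (forall k, (l <= k < N)%N -> sqintv P (u k) /\ sqintv P (v k)) ->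
  forall k, (l <= k <= N)%N -> forall t,
    mixdiff lam (state P l om E xi w k t) (state P l om E xi u k t)
      (state P l om E xi v k t) (state P l om (homog E) (fun _ => 0) e k t).
Proof.
move=> sq_x sq_u k /andP[_ kN]; rewrite /state.
elim: (k - l)%N (leq_sub2r l kN) => {k kN} [|j IH] jN t; first exact: mixdiff_cst.
have [sxu sxv] : sqintv P (xs P l om E xi u j) /\ sqintv P (xs P l om E xi v j).
  by have := sq_x (l + j)%N; rewrite /state addKn; apply; lia.
have [scu scv] := sq_u (l + j)%N ltac:(lia).
have hx := IH (ltnW jN).
have hEx := mixdiff_Ev hx sxu sxv.
have hc s : mixdiff lam (w (l + j)%N s) (u (l + j)%N s) (v (l + j)%N s) (e (l + j)%N s).
  by [].
have hEc := mixdiff_Ev hc scu scv.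
rewrite /=.
repeat first [apply: mixdiffD | apply: mixdiffZ | apply: mixdiff_mulmx
             | apply: mixdiff_cst | exact: hx | exact: hEx | exact: hc | exact: hEc].
Qed.

End StateMixture.

Section CostIntegrand.
Context (R : realType) (d : measure_display) (T : measurableType d).
Context (P : probability T R) (n m N l : nat) (om : nat -> T -> R).

Definition cost_integrand (E : lqdata R T n m) (x : nat -> T -> 'cV[R]_n)
    (u : nat -> T -> 'cV[R]_m) (t : T) : R :=
  dot (cG E *m x N t) (x N t) + 2 * dot (cg E t) (x N t)
  + dot (cGb E *m Ev P (x N)) (Ev P (x N)) + 2 * dot (cgb E t) (Ev P (x N))
  + \sum_(l <= k < N)
      ( dot (cQ E k *m x k t) (x k t) + 2 * dot (cS E k *m u k t) (x k t)
      + dot (cR E k *m u k t) (u k t) + 2 * dot (cq E k t) (x k t)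
      + 2 * dot (crho E k t) (u k t)
      + dot (cQb E k *m Ev P (x k)) (Ev P (x k))
      + 2 * dot (cSb E k *m Ev P (u k)) (Ev P (x k))
      + dot (cRb E k *m Ev P (u k)) (Ev P (u k))
      + 2 * dot (cqb E k t) (Ev P (x k)) + 2 * dot (crhob E k t) (Ev P (u k))).

Lemma costE E xi u :
  cost P N l om E xi u = Ex P (cost_integrand E (state P l om E xi u) u).
Proof. by []. Qed.

Definition sqint_linear_terms (E : lqdata R T n m) :=
  [/\ sqintv P (cg E), sqintv P (cgb E)
    & forall k, (l <= k < N)%N ->
        [/\ sqintv P (cq E k), sqintv P (cqb E k),
            sqintv P (crho E k) & sqintv P (crhob E k)]].

Lemma sqint_linear_terms_homog E : sqint_linear_terms (homog E).
Proof. by split=> [||k _]; [..| split]; exact: sqintv_cst. Qed.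

Lemma L1_cost_integrand E x u : (l <= N)%N -> sqint_linear_terms E ->
  (forall k, (l <= k <= N)%N -> sqintv P (x k)) ->
  (forall k, (l <= k < N)%N -> sqintv P (u k)) ->
  L1 P (cost_integrand E x u).
Proof.
move=> lN [sq_g sq_gb sq_q] sq_x sq_u; apply: L1D.
  have sq_xN := sq_x N ltac:(lia).
  repeat first [apply: L1D | apply: L1Z | apply: L1_dot | apply: sqintv_cst
               | apply: sqintv_mulmx | exact: sq_xN | exact: sq_g | exact: sq_gb].
apply: L1_sum => k; rewrite mem_index_iota => kN.
have sq_xk := sq_x k ltac:(lia); have sq_uk := sq_u k kN.
have [sq1 sq2 sq3 sq4] := sq_q k kN.
repeat first [apply: L1D | apply: L1Z | apply: L1_dot | apply: sqintv_cst
             | apply: sqintv_mulmx | exact: sq_xk | exact: sq_uk | exact: sq1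
             | exact: sq2 | exact: sq3 | exact: sq4].
Qed.

(* Every summand of the integrand is a dot product of two vectors, each a
   state, a control, an expectation of these, or a constant; the homogeneous
   data replace the constants by 0, which is their difference. *)
Lemma cost_integrand_quadmix lam E (xw xu xv xe : nat -> T -> 'cV[R]_n)
    (w u v e : nat -> T -> 'cV[R]_m) : (l <= N)%N ->
  (forall k, (l <= k <= N)%N -> forall t,
     mixdiff lam (xw k t) (xu k t) (xv k t) (xe k t)) ->
  (forall k, (l <= k <= N)%N ->
     mixdiff lam (Ev P (xw k)) (Ev P (xu k)) (Ev P (xv k)) (Ev P (xe k))) ->
  (forall k, (l <= k < N)%N -> forall t, mixdiff lam (w k t) (u k t) (v k t) (e k t)) ->
  (forall k, (l <= k < N)%N ->
     mixdiff lam (Ev P (w k)) (Ev P (u k)) (Ev P (v k)) (Ev P (e k))) ->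
  forall t, quadmix lam (cost_integrand E xw w t) (cost_integrand E xu u t)
                        (cost_integrand E xv v t) (cost_integrand (homog E) xe e t).
Proof.
move=> lN hx hEx hc hEc t; apply: quadmixD.
  have hxN := hx N ltac:(lia) t; have hExN := hEx N ltac:(lia).
  repeat first [apply: quadmixD | apply: quadmixM | apply: quadmix_dot
               | apply: mixdiff_mulmx | apply: mixdiff_cst | exact: hxN | exact: hExN].
apply: quadmix_sum => k; rewrite mem_index_iota => kN.
have hxk := hx k ltac:(lia) t; have hExk := hEx k ltac:(lia).
have hck := hc k kN t; have hEck := hEc k kN.
repeat first [apply: quadmixD | apply: quadmixM | apply: quadmix_dot
             | apply: mixdiff_mulmx | apply: mixdiff_cst | exact: hxk | exact: hExk
             | exact: hck | exact: hEck].
Qed.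

End CostIntegrand.

Section Convexity.
Context (R : realType) (d : measure_display) (T : measurableType d).
Context (P : probability T R) (n m N l : nat) (om : nat -> T -> R).
Context (xi0 : T -> 'cV[R]_n) (E : lqdata R T n m).
Hypotheses (lN : (l <= N)%N) (wpE : wellposed P N l om E xi0).
Hypothesis sqE : sqint_linear_terms P N l E.

Local Notation adm := (admissible P N l om xi0).
Local Notation J := (cost P N l om E).
Local Notation J0 := (cost P N l om (homog E) (fun _ => 0)).

Lemma cost_mix lam xi u v : init_state P om l N xi -> adm u -> adm v ->
  J xi (fun k t => lam *: u k t + (1 - lam) *: v k t)
  = lam * J xi u + (1 - lam) * J xi v - lam * (1 - lam) * J0 (fun k t => u k t - v k t).
Proof.
move=> hxi hu hv.
have sq_xu k (kN : (l <= k <= N)%N) := wpE hxi hu kN.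
have sq_xv k (kN : (l <= k <= N)%N) := wpE hxi hv kN.
have sq_u k (kN : (l <= k < N)%N) := proj2 (hu k kN).
have sq_v k (kN : (l <= k < N)%N) := proj2 (hv k kN).
have hx := state_mixdiff lam (fun k kN => conj (sq_xu k kN) (sq_xv k kN))
                             (fun k kN => conj (sq_u k kN) (sq_v k kN)).
have hEx k (kN : (l <= k <= N)%N) := mixdiff_Ev (hx k kN) (sq_xu k kN) (sq_xv k kN).
have hc k t : mixdiff lam (lam *: u k t + (1 - lam) *: v k t) (u k t) (v k t)
                          (u k t - v k t) by [].
have hEc k (kN : (l <= k < N)%N) := mixdiff_Ev (hc k) (sq_u k kN) (sq_v k kN).
have sq_e k : (l <= k <= N)%N ->
    sqintv P (state P l om (homog E) (fun _ => 0) (fun k t => u k t - v k t) k).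
  move=> kN; have -> : state P l om (homog E) (fun _ => 0) (fun k t => u k t - v k t) k
                     = fun t => state P l om E xi u k t - state P l om E xi v k t.
    by apply/funext => t; case: (hx k kN t).
  exact: sqintvB (sq_xu k kN) (sq_xv k kN).
have sq_uv k (kN : (l <= k < N)%N) := sqintvB (sq_u k kN) (sq_v k kN).
rewrite !costE; apply: quadmix_Ex.
- exact: cost_integrand_quadmix.
- exact: L1_cost_integrand lN sqE sq_xu sq_u.
- exact: L1_cost_integrand lN sqE sq_xv sq_v.
- exact: L1_cost_integrand lN (sqint_linear_terms_homog _ _ _ E) sq_e sq_uv.
Qed.

Lemma convex_cost_of_nonneg :
  (forall u, adm u -> 0 <= J0 u) ->
  forall xi, init_state P om l N xi -> convex_on_U adm (J xi).
Proof.
move=> J0_ge0 xi hxi u v hu hv lam /andP[lam_ge0 lam_le1].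
rewrite cost_mix // gerBl !mulr_ge0 ?subr_ge0 //.
exact/J0_ge0/admissibleB.
Qed.

Lemma nonneg_of_convex_cost xi :
  init_state P om l N xi -> convex_on_U adm (J xi) ->
  forall u, adm u -> 0 <= J0 u.
Proof.
move=> hxi convJ u hu.
have adm0 := @admissible0 _ _ _ P _ m N l om xi0.
have := convJ u _ hu adm0 (1 / 2) ltac:(apply/andP; split; lra).
rewrite cost_mix // gerBl pmulr_rge0; last lra.
suff -> : (fun k t => u k t - 0) = u by [].
by apply/funext => k; apply/funext => t; rewrite subr0.
Qed.

End Convexity.

Unset Implicit Arguments. Set Strict Implicit.

Theorem corollary3p1
  (R : realType) (d : measure_display) (T : measurableType d) (P : probability T R)
  (N n m l : nat) (om : nat -> T -> R) (xi0 : T -> 'cV[R]_n)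
  (D : lqdata R T n m)
  (M : (nat -> T -> 'cV[R]_m) -> (nat -> T -> 'cV[R]_m))
  (* dimensions and initial time l in N_0 = {0, ..., N-1} *)
  (hN : (1 <= N)%N) (hn : (1 <= n)%N) (hm : (1 <= m)%N) (hl : (l < N)%N)
  (* the noise: real random variables omega_l, ..., omega_{N-1} *)
  (hom : forall k, (l <= k < N)%N -> measurable_fun setT (om k))
  (* xi0 : the initial state generating the filtration F_k = sigma{xi0, omega_l..omega_k} *)
  (hxi0 : init_state P om l N xi0)
  (* E[omega_{k+1} | F_k] = 0 and E[omega_{k+1}^2 | F_k] = 1 *)
  (hmart : forall k, (l <= k)%N -> (k.+1 < N)%N ->
     is_condexp P (filt xi0 om l k) (om k.+1) (fun _ => 0) /\
     is_condexp P (filt xi0 om l k) (fun t => om k.+1 t ^+ 2) (fun _ => 1))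
  (* symmetry of the weighting matrices *)
  (hsym : forall k, (k < N)%N ->
     (cQ D k)^T = cQ D k /\ (cQb D k)^T = cQb D k /\
     (cR D k)^T = cR D k /\ (cRb D k)^T = cRb D k)
  (hG : (cG D)^T = cG D) (hGb : (cGb D)^T = cGb D)
  (* square-integrable random g, gbar; adapted (square-integrable) q, qbar, rho, rhobar *)
  (hg : sqintv P (cg D)) (hgb : sqintv P (cgb D))
  (hq : forall k, (l <= k < N)%N ->
     Fmeasv (filt xi0 om l k) (cq D k) /\ sqintv P (cq D k) /\
     Fmeasv (filt xi0 om l k) (cqb D k) /\ sqintv P (cqb D k) /\
     Fmeasv (filt xi0 om l k) (crho D k) /\ sqintv P (crho D k) /\
     Fmeasv (filt xi0 om l k) (crhob D k) /\ sqintv P (crhob D k))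
  (* the state equation is well posed in L^2 *)
  (hwp : wellposed P N l om D xi0) (hwp0 : wellposed P N l om (homog D) xi0)
  (* M : the bounded self-adjoint linear operator on U_ad with J^0(l,0;u) = <M u, u> *)
  (hMU : forall u, admissible P N l om xi0 u -> admissible P N l om xi0 (M u))
  (hMlin : forall (a : R) u v w, admissible P N l om xi0 u -> admissible P N l om xi0 v ->
     admissible P N l om xi0 w ->
     ipU P N l (M (fun k t => a *: u k t + v k t)) w
       = a * ipU P N l (M u) w + ipU P N l (M v) w)
  (hMsa : forall u v, admissible P N l om xi0 u -> admissible P N l om xi0 v ->
     ipU P N l (M u) v = ipU P N l u (M v))
  (hMbd : exists C : R, forall u, admissible P N l om xi0 u ->
     ipU P N l (M u) (M u) <= C * ipU P N l u u)
  (hMJ : forall u, admissible P N l om xi0 u ->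
     cost P N l om (homog D) (fun _ => 0) u = ipU P N l (M u) u) :
  [<-> (* (i) *)  forall u, admissible P N l om xi0 u ->
                    0 <= cost P N l om (homog D) (fun _ => 0) u;
       (* (ii) *) exists xi, init_state P om l N xi /\
                    convex_on_U (admissible P N l om xi0) (cost P N l om D xi);
       (* (iii) *) forall xi, init_state P om l N xi ->
                    convex_on_U (admissible P N l om xi0) (cost P N l om D xi);
       (* (iv) *) exists xi, init_state P om l N xi /\
                    convex_on_U (admissible P N l om xi0) (cost P N l om (homog D) xi);
       (* (v) *)  forall xi, init_state P om l N xi ->
                    convex_on_U (admissible P N l om xi0) (cost P N l om (homog D) xi);
       (* (vi) *) forall u, admissible P N l om xi0 u -> 0 <= ipU P N l (M u) u].
Proof.
have lN : (l <= N)%N := ltnW hl.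
have sqD : sqint_linear_terms P N l D.
  split=> // k /hq[_ [? [_ [? [_ [? [_ ?]]]]]]]; by split.
have sq0 := sqint_linear_terms_homog P N l D.
tfae.
- by move=> J0_ge0; exists xi0; split; last exact: convex_cost_of_nonneg.
- case=> xi [hxi convJ]; apply: convex_cost_of_nonneg => //.
  exact: nonneg_of_convex_cost hxi convJ.
- move=> convJ; exists xi0; split => //.
  apply: convex_cost_of_nonneg => // u.
  exact: nonneg_of_convex_cost hxi0 (convJ xi0 hxi0) u.
- case=> xi [hxi convJ0]; apply: convex_cost_of_nonneg => //.
  exact: nonneg_of_convex_cost hxi convJ0.
- move=> convJ0 u hu; rewrite -hMJ //.
  exact: nonneg_of_convex_cost hxi0 (convJ0 xi0 hxi0) u hu.
- by move=> M_ge0 u hu; rewrite hMJ //; exact: M_ge0.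
Qed.
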